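(* In any execution of $\mathcal{U}$, suppose $S$ stores operation $o$ at time $T$ and stores operation $o'$ at time $T' > T$. If $o \neq o'$ then $o$ is done at time $T'$.
   Context: Model: an asynchronous shared-memory system with possibly infinitely many processes, any of which may crash, communicating via atomic shared objects. A fetch-and-increment (F\&I) object stores an integer; F\&I$(C)$ atomically returns the current value and increments it. A generalized-compare-and-swap (GCAS) object $O$ stores a value and supports Read$(O)$ and GCAS$(c, O, v_1, v_2)$, which atomically does: if $c(\text{current value of } O, v_1)$ holds then set $O := v_2$ and return true, else return false. Tuples are compared componentwise for $=$; GCAS$(>, A, (t,-,-), v)$ succeeds iff the time field of $A$ is strictly greater than $t$. Implemented type $\mathcal{T} = (OP, RES, Q, \delta)$ with initial state $s_0$; a procedure $apply_{\mathcal{T}}(o,s)$ returns some $(s',r)$ with $(s,o,s',r)\in\delta$. $NULL$ is a value different from every response of $\mathcal{T}$, and $NOOP$ is a name different from every operation of $\mathcal{T}$. Algorithm $\mathcal{U}$: each process $p$ owns a GCAS object $H_p$ with fields $(time, response)$. Shared objects: F\&I object $C$, initially $1$; GCAS object $A$ with fields $(time, op, ptr)$, initially $(0, NOOP, h(NOOP))$, where $h(NOOP)$ is a pointer to an immutable location containing $(0,\perp)$; GCAS object $S$ with fields $(time, state, response, ptr)$, initially $(0, s_0, \perp, h(NOOP))$. Process $p$ performs operation $o$ by calling DoOp$(o)$: (1) DoOp$(o)$ invoked; (2) $t := $ F\&I$(C)$; (3) $H_p := (t, NULL)$; (4) while $H_p = (t, NULL)$ do: (5) $(t^*, s^*, r^*,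 roptr^* ) := S$; (6) GCAS$(=, *roptr^*, (t^*, NULL), (t^*, r^* ))$; (7) GCAS$(>, A, (t,-,-), (t, o, \&H_p))$; (8) $(t', o', roptr') := A$; (9) $(\hat t, \hat r) := *roptr'$; (10) if $(\hat t,\hat r) = (t', NULL)$ then (11) $(s', r') := apply_{\mathcal{T}}(o', s^* )$; (12) GCAS$(=, S, (t^*,s^*,r^*,roptr^* ), (t', s', r', roptr'))$; (13) else GCAS$(=, A, (t', o', roptr'), (t, o, \&H_p))$; end while; (14) return $H_p.response$. Notation: an ''operation'' $o$ means one invocation of DoOp$(o)$ (or the initial $NOOP$). $p(o)$ is the process executing it; $t(o)$ is the value returned by its F\&I at line 2, or $\infty$ if line 2 has not been executed; $h(o)$ is $H_{p(o)}$. For $NOOP$: $t(NOOP)=0$ and $h(NOOP)$ is the immutable location containing $(0,\perp)$. Operation $o$ is done at time $T$ if at some time $T'\le T$, $h(o) = (t(o), r)$ with $r \neq NULL$. ''Operation $o$ is stored in $S$'' at a time means $S = (t(o), -, r, h(o))$ for some $r$ at that time (at every time exactly one operation is stored in $S$). *)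

From Stdlib Require Import Arith.

Set Implicit Arguments.

Section AlgU.

(* OP, RES, Q : operations, responses, states of the implemented type T;
   delta : its transition relation (s, o, s', r) in delta; s0 : initial state;
   Proc : the (possibly infinite) set of processes. *)
Context (OP RES Q Proc : Type) (delta : Q -> OP -> Q -> RES -> Prop) (s0 : Q).

(* pointers: h(NOOP) (immutable location containing (0,bot)) or &H_p *)
Inductive ptr := PNoop | PH (p : Proc).

Inductive opn := NOOP | Op (o : OP).

Inductive rval := RNull | RBot | RVal (r : RES).

Record Shared := mkShared {
  sC : nat;                          (* F&I object C *)
  sA : nat * opn * ptr;              (* A = (time, op, ptr) *)
  sS : nat * Q * rval * ptr;         (* S = (time, state, response, ptr) *)
  sH : Proc -> nat * rval            (* H_p = (time, response) *)
}.

Definition deref (H : Proc -> nat * rval) (x : ptr) : nat * rval :=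
  match x with PNoop => (0, RBot) | PH q => H q end.

(* program counter of a process, together with its local variables.
   Lk ... means "next step executes line k". *)
Inductive pcT :=
| Idle                                           (* no pending operation; next: line 1 *)
| L2 (o : OP)
| L3 (o : OP) (t : nat)
| L4 (o : OP) (t : nat)
| L5 (o : OP) (t : nat)
| L6 (o : OP) (t : nat) (ts : nat) (ss : Q) (rs : rval) (ps : ptr)
| L7 (o : OP) (t : nat) (ts : nat) (ss : Q) (rs : rval) (ps : ptr)
| L8 (o : OP) (t : nat) (ts : nat) (ss : Q) (rs : rval) (ps : ptr)
| L9 (o : OP) (t : nat) (ts : nat) (ss : Q) (rs : rval) (ps : ptr)
     (t' : nat) (o' : opn) (p' : ptr)
| L10 (o : OP) (t : nat) (ts : nat) (ss : Q) (rs : rval) (ps : ptr)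
      (t' : nat) (o' : opn) (p' : ptr) (th : nat) (rh : rval)
| L11 (o : OP) (t : nat) (ts : nat) (ss : Q) (rs : rval) (ps : ptr)
      (t' : nat) (o' : opn) (p' : ptr)
| L12 (o : OP) (t : nat) (ts : nat) (ss : Q) (rs : rval) (ps : ptr)
      (t' : nat) (s' : Q) (r' : RES) (p' : ptr)
| L13 (o : OP) (t : nat) (t' : nat) (o' : opn) (p' : ptr)
| L14 (o : OP) (t : nat).

Definition updH (sh : Shared) (q : Proc) (v : nat * rval) (sh' : Shared) : Prop :=
  sC sh' = sC sh /\ sA sh' = sA sh /\ sS sh' = sS sh /\
  sH sh' q = v /\ (forall q', q' <> q -> sH sh' q' = sH sh q').

Inductive lstep (p : Proc) : Shared -> pcT -> Shared -> pcT -> Prop :=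
(* (1) DoOp(o) invoked *)
| st1 sh o : lstep p sh Idle sh (L2 o)
(* (2) t := F&I(C) *)
| st2 sh o :
    lstep p sh (L2 o) (mkShared (S (sC sh)) (sA sh) (sS sh) (sH sh)) (L3 o (sC sh))
(* (3) H_p := (t, NULL) *)
| st3 sh sh' o t : updH sh p (t, RNull) sh' -> lstep p sh (L3 o t) sh' (L4 o t)
(* (4) while H_p = (t, NULL) *)
| st4_loop sh o t : sH sh p = (t, RNull) -> lstep p sh (L4 o t) sh (L5 o t)
| st4_exit sh o t : sH sh p <> (t, RNull) -> lstep p sh (L4 o t) sh (L14 o t)
(* (5) (t*, s*, r*, roptr* ) := S *)
| st5 sh o t ts ss rs ps :
    sS sh = (ts, ss, rs, ps) -> lstep p sh (L5 o t) sh (L6 o t ts ss rs ps)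
(* (6) GCAS(=, *roptr*, (t*, NULL), (t*, r* )); the location h(NOOP) is immutable *)
| st6_succ sh sh' o t ts ss rs q :
    sH sh q = (ts, RNull) -> updH sh q (ts, rs) sh' ->
    lstep p sh (L6 o t ts ss rs (PH q)) sh' (L7 o t ts ss rs (PH q))
| st6_fail sh o t ts ss rs ps :
    (forall q, ps = PH q -> sH sh q <> (ts, RNull)) ->
    lstep p sh (L6 o t ts ss rs ps) sh (L7 o t ts ss rs ps)
(* (7) GCAS(>, A, (t,-,-), (t, o, &H_p)) *)
| st7_succ sh o t ts ss rs ps :
    t < fst (fst (sA sh)) ->
    lstep p sh (L7 o t ts ss rs ps)
      (mkShared (sC sh) (t, Op o, PH p) (sS sh) (sH sh)) (L8 o t ts ss rs ps)
| st7_fail sh o t ts ss rs ps :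
    fst (fst (sA sh)) <= t ->
    lstep p sh (L7 o t ts ss rs ps) sh (L8 o t ts ss rs ps)
(* (8) (t', o', roptr') := A *)
| st8 sh o t ts ss rs ps t' o' p' :
    sA sh = (t', o', p') ->
    lstep p sh (L8 o t ts ss rs ps) sh (L9 o t ts ss rs ps t' o' p')
(* (9) (^t, ^r) := *roptr' *)
| st9 sh o t ts ss rs ps t' o' p' th rh :
    deref (sH sh) p' = (th, rh) ->
    lstep p sh (L9 o t ts ss rs ps t' o' p') sh (L10 o t ts ss rs ps t' o' p' th rh)
(* (10) if (^t, ^r) = (t', NULL) then ... else ... *)
| st10_then sh o t ts ss rs ps t' o' p' th rh :
    (th, rh) = (t', RNull) ->
    lstep p sh (L10 o t ts ss rs ps t' o' p' th rh) sh (L11 o t ts ss rs ps t' o' p')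
| st10_else sh o t ts ss rs ps t' o' p' th rh :
    (th, rh) <> (t', RNull) ->
    lstep p sh (L10 o t ts ss rs ps t' o' p' th rh) sh (L13 o t t' o' p')
(* (11) (s', r') := apply_T(o', s* ), any (s*, o', s', r') in delta *)
| st11 sh o t ts ss rs ps t' oo p' s' r' :
    delta ss oo s' r' ->
    lstep p sh (L11 o t ts ss rs ps t' (Op oo) p') sh (L12 o t ts ss rs ps t' s' r' p')
(* (12) GCAS(=, S, (t*, s*, r*, roptr* ), (t', s', r', roptr')) *)
| st12_succ sh o t ts ss rs ps t' s' r' p' :
    sS sh = (ts, ss, rs, ps) ->
    lstep p sh (L12 o t ts ss rs ps t' s' r' p')
      (mkShared (sC sh) (sA sh) (t', s', RVal r', p') (sH sh)) (L4 o t)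
| st12_fail sh o t ts ss rs ps t' s' r' p' :
    sS sh <> (ts, ss, rs, ps) ->
    lstep p sh (L12 o t ts ss rs ps t' s' r' p') sh (L4 o t)
(* (13) GCAS(=, A, (t', o', roptr'), (t, o, &H_p)) *)
| st13_succ sh o t t' o' p' :
    sA sh = (t', o', p') ->
    lstep p sh (L13 o t t' o' p') (mkShared (sC sh) (t, Op o, PH p) (sS sh) (sH sh)) (L4 o t)
| st13_fail sh o t t' o' p' :
    sA sh <> (t', o', p') ->
    lstep p sh (L13 o t t' o' p') sh (L4 o t)
(* (14) return H_p.response *)
| st14 sh o t : lstep p sh (L14 o t) sh Idle.

Record Config := mkConfig { csh : Shared; cpc : Proc -> pcT }.

Definition step (c : Config) (p : Proc) (c' : Config) : Prop :=
  lstep p (csh c) (cpc c p) (csh c') (cpc c' p) /\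
  (forall q, q <> p -> cpc c' q = cpc c q).

(* initial configuration (the initial contents of the H_p are left arbitrary) *)
Definition initial (c : Config) : Prop :=
  sC (csh c) = 1 /\ sA (csh c) = (0, NOOP, PNoop) /\
  sS (csh c) = (0, s0, RBot, PNoop) /\ (forall q, cpc c q = Idle).

(* An execution with n steps: configurations cfg 0 .. cfg n ("times"),
   step i (by process who i) leads from cfg i to cfg (i+1).
   Crashed processes simply take no further steps. *)
Definition execution (n : nat) (cfg : nat -> Config) (who : nat -> Proc) : Prop :=
  initial (cfg 0) /\ forall i, i < n -> step (cfg i) (who i) (cfg (S i)).

(* Operations: the initial NOOP, or the invocation of DoOp performed
   (line 1) by process p at step i. *)
Inductive operation := NoopOp | Inv (i : nat) (p : Proc).

Definition is_operation (n : nat) (cfg : nat -> Config) (who : nat -> Proc)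
    (o : operation) : Prop :=
  match o with
  | NoopOp => True
  | Inv i p => i < n /\ who i = p /\ cpc (cfg i) p = Idle
  end.

(* t(o) = t : the value returned by o's F&I at line 2 (t(o) = infinity, i.e.
   no such t, if line 2 has not been executed); t(NOOP) = 0. *)
Definition t_of (n : nat) (cfg : nat -> Config) (who : nat -> Proc)
    (o : operation) (t : nat) : Prop :=
  match o with
  | NoopOp => t = 0
  | Inv i p => exists j, i < j /\ j < n /\ who j = p /\
      (exists oo, cpc (cfg j) p = L2 oo) /\ sC (csh (cfg j)) = t /\
      (forall k, i < k -> k < j -> who k <> p)
  end.

Definition h_of (o : operation) : ptr :=
  match o with NoopOp => PNoop | Inv _ p => PH p end.

Definition stored_at (n : nat) (cfg : nat -> Config) (who : nat -> Proc)
    (o : operation) (T : nat) : Prop :=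
  exists t s r, t_of n cfg who o t /\ sS (csh (cfg T)) = (t, s, r, h_of o).

Definition done_at (n : nat) (cfg : nat -> Config) (who : nat -> Proc)
    (o : operation) (T : nat) : Prop :=
  exists T0 t r, T0 <= T /\ t_of n cfg who o t /\
    deref (sH (csh (cfg T0))) (h_of o) = (t, r) /\ r <> RNull.

End AlgU.

(* S leaves an operation only through the GCAS of line 12, and the process performing
   it has, after reading S at line 5, run line 6 on the pointer it read: either that
   GCAS wrote the (non-NULL) response of S into H, or it failed because H was no longer
   (t, NULL).  An invariant shows that a pending H_q = (t, NULL) of an active process
   can only be overwritten by such a line-6 write, so in both cases the operation is
   done.  Finally S at T and at T' differ whenever o <> o': the NOOP alone uses
   h(NOOP), and two invocations by one process obtain different values from C. *)

From Stdlib Require Import Arith Lia Classical.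

Set Implicit Arguments.

Section LocalSteps.

Context (OP RES Q Proc : Type).
Local Notation PC := (pcT OP RES Q Proc).
Local Notation SH := (Shared OP RES Q Proc).
Local Notation NULL := (RNull RES).

Definition active_time (x : PC) : option nat :=
  match x with
  | L4 _ _ _ _ t | L5 _ _ _ _ t | L6 _ t _ _ _ _ | L7 _ t _ _ _ _
  | L8 _ t _ _ _ _ | L9 _ t _ _ _ _ _ _ _ | L10 _ t _ _ _ _ _ _ _ _ _ | L11 _ t _ _ _ _ _ _ _
  | L12 _ t _ _ _ _ _ _ _ _ | L13 _ _ _ t _ _ _ => Some t
  | _ => None
  end.

Definition S_inv (Tr : nat -> ptr Proc -> Prop) (sh : SH) : Prop :=
  let '(ts, _, rs, ps) := sS sh in rs <> NULL /\ Tr ts ps.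

Definition A_inv (Tr : nat -> ptr Proc -> Prop) (sh : SH) : Prop :=
  let '(ta, _, pa) := sA sh in Tr ta pa.

(* [Tr t x] / [Dn t x]: the operation with time [t] and pointer [x] is tracked / done.
   From line 7 on, the operation read from [S] at line 5 is done. *)
Definition line_inv (Tr Dn : nat -> ptr Proc -> Prop) (x : PC) : Prop :=
  match x with
  | L6 _ _ ts _ rs ps => rs <> NULL /\ Tr ts ps
  | L7 _ _ ts _ _ ps | L8 _ _ ts _ _ ps => Dn ts ps
  | L9 _ _ ts _ _ ps t' _ p' | L10 _ _ ts _ _ ps t' _ p' _ _
  | L11 _ _ ts _ _ ps t' _ p' | L12 _ _ ts _ _ ps t' _ _ p' =>
      Dn ts ps /\ Tr t' p'
  | _ => True
  end.

Lemma line_inv_mono {Tr Dn Tr' Dn' : nat -> ptr Proc -> Prop} {x} :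
  (forall t p, Tr t p -> Tr' t p) -> (forall t p, Dn t p -> Dn' t p) ->
  line_inv Tr Dn x -> line_inv Tr' Dn' x.
Proof. destruct x; simpl; intuition auto. Qed.

Context (delta : Q -> OP -> Q -> RES -> Prop).

Ltac destruct_updH :=
  repeat match goal with H : updH _ _ _ _ |- _ => destruct H as (? & ? & ? & ? & ?) end.

Lemma lstep_C_le w (sh sh' : SH) x x' :
  lstep delta w sh x sh' x' -> sC sh <= sC sh'.
Proof. intros Hl; inversion Hl; subst; destruct_updH; simpl; lia. Qed.

Lemma lstep_L2_C w (sh sh' : SH) o x' :
  lstep delta w sh (L2 _ _ _ o) sh' x' -> sC sh' = S (sC sh).
Proof. intros Hl; inversion Hl; subst; reflexivity. Qed.

Lemma lstep_A w (sh sh' : SH) x x' :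
  lstep delta w sh x sh' x' ->
  sA sh' = sA sh \/ exists o t, active_time x = Some t /\ sA sh' = (t, Op o, PH w).
Proof. intros Hl; inversion Hl; subst; destruct_updH; simpl; eauto. Qed.

Lemma lstep_S w (sh sh' : SH) x x' :
  lstep delta w sh x sh' x' ->
  sS sh' = sS sh \/
  exists o t ts ss rs ps t' s' r' p',
    x = L12 o t ts ss rs ps t' s' r' p' /\ sS sh = (ts, ss, rs, ps) /\
    sS sh' = (t', s', RVal r', p').
Proof.
  intros Hl; inversion Hl; subst; destruct_updH; simpl; auto.
  right; do 10 eexists; eauto.
Qed.

Lemma lstep_H w (sh sh' : SH) x x' q :
  lstep delta w sh x sh' x' ->
  sH sh' q = sH sh q \/
  (q = w /\ exists o t, x = L3 _ _ _ o t /\ sH sh' q = (t, NULL)) \/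
  (exists o t ts ss rs, x = L6 o t ts ss rs (PH q) /\
     sH sh q = (ts, NULL) /\ sH sh' q = (ts, rs)).
Proof.
  intros Hl;
    inversion Hl as [| | ? ? ? ? Hu | | | | ? ? ? ? ? ? ? q' Hq Hu | | | | | | | | | | | | |];
    subst; auto.
  - destruct Hu as (_ & _ & _ & Hw & Hothers).
    destruct (classic (q = w)) as [-> | Hqw]; eauto 10.
  - destruct Hu as (_ & _ & _ & Hq' & Hothers).
    destruct (classic (q = q')) as [-> | Hqq]; eauto 10.
Qed.

(* The loop is left only when [H_w] is no longer [(t, NULL)]. *)
Lemma lstep_active_time_kept w (sh sh' : SH) x x' t :
  lstep delta w sh x sh' x' -> active_time x = Some t -> sH sh w = (t, NULL) ->
  active_time x' = Some t.
Proof. intros Hl; inversion Hl; subst; simpl; congruence. Qed.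

Lemma lstep_active_time_new w (sh sh' : SH) x x' t :
  lstep delta w sh x sh' x' -> active_time x' = Some t ->
  active_time x = Some t \/ (exists o, x = L3 _ _ _ o t /\ sH sh' w = (t, NULL)).
Proof.
  intros Hl; inversion Hl; subst; destruct_updH; simpl; intros E; try discriminate; auto.
  injection E as ->; eauto.
Qed.

(* Besides [q] itself, only line-6 GCASes write [H_q], and they copy the response read
   from [S]. *)
Lemma step_pending c w c' q t :
  step delta c w c' ->
  (forall o t0 ts ss rs ps, cpc c w = L6 o t0 ts ss rs ps -> rs <> NULL) ->
  sH (csh c) q = (t, NULL) -> active_time (cpc c q) = Some t ->
  (sH (csh c') q = (t, NULL) /\ active_time (cpc c' q) = Some t) \/
  (exists r, sH (csh c') q = (t, r) /\ r <> NULL).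
Proof.
  intros [Hl Hothers] HL6 Hq Hact.
  destruct (lstep_H q Hl)
    as [E | [[-> (o & t0 & Hx & _)] | (o & t0 & ts & ss & rs & Hx & Hts & E)]].
  - left; rewrite E; split; [exact Hq |].
    destruct (classic (q = w)) as [-> | Hqw].
    + exact (lstep_active_time_kept Hl Hact Hq).
    + rewrite Hothers; auto.
  - rewrite Hx in Hact; discriminate.
  - rewrite Hq in Hts; injection Hts as <-.
    right; exists rs; split; [exact E | exact (HL6 _ _ _ _ _ _ Hx)].
Qed.

Lemma lstep_line_inv w (sh sh' : SH) x x' (Tr Dn Tr' Dn' : nat -> ptr Proc -> Prop) :
  lstep delta w sh x sh' x' ->
  (forall t p, Tr t p -> Tr' t p) -> (forall t p, Dn t p -> Dn' t p) ->
  S_inv Tr sh -> A_inv Tr sh ->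
  (forall q ts rs, sH sh' q = (ts, rs) -> rs <> NULL -> Dn' ts (PH q)) ->
  (forall ts ps, Tr ts ps ->
     (forall q, ps = PH q -> sH sh q <> (ts, NULL)) -> Dn' ts ps) ->
  line_inv Tr Dn x -> line_inv Tr' Dn' x'.
Proof.
  unfold S_inv, A_inv.
  intros Hl HTr HDn HS HA Hwritten Hfailed Hx.
  inversion Hl; subst; simpl in *;
    repeat match goal with H : sS _ = _ |- _ => rewrite H in HS end;
    repeat match goal with H : sA _ = _ |- _ => rewrite H in HA end;
    try (intuition auto; fail).
  match goal with H : updH _ _ _ _ |- _ => destruct H as (_ & _ & _ & Hq & _) end.
  eapply Hwritten; [exact Hq | tauto].
Qed.

End LocalSteps.

Section Execution.

Context (OP RES Q Proc : Type) (delta : Q -> OP -> Q -> RES -> Prop) (s0 : Q)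
  (n : nat) (cfg : nat -> Config OP RES Q Proc) (who : nat -> Proc).
Hypothesis Hexec : execution delta s0 n cfg who.
Local Notation NULL := (RNull RES).
Local Notation H_at k := (sH (csh (cfg k))).
Local Notation pc k := (cpc (cfg k)).

Lemma execution_step k : k < n -> step delta (cfg k) (who k) (cfg (S k)).
Proof. destruct Hexec as [_ Hsteps]; exact (Hsteps k). Qed.

Definition done_by k q t := exists k0 r, k0 <= k /\ H_at k0 q = (t, r) /\ r <> NULL.

Definition tracked k q t :=
  done_by k q t \/ (H_at k q = (t, NULL) /\ active_time (pc k q) = Some t).

Definition ptr_tracked k t (x : ptr Proc) :=
  match x with PNoop _ => True | PH q => tracked k q t end.

Definition ptr_done k t (x : ptr Proc) :=
  match x with PNoop _ => True | PH q => done_by k q t end.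

Definition proc_inv k q :=
  (forall t, active_time (pc k q) = Some t -> tracked k q t) /\
  line_inv (ptr_tracked k) (ptr_done k) (pc k q).

Definition invariant k :=
  S_inv (ptr_tracked k) (csh (cfg k)) /\ A_inv (ptr_tracked k) (csh (cfg k)) /\
  forall q, proc_inv k q.

Lemma done_by_mono k k' q t : k <= k' -> done_by k q t -> done_by k' q t.
Proof. intros Hk (k0 & r & Hk0 & Hq & Hr). exists k0, r; split; [lia | auto]. Qed.

Lemma ptr_done_succ k : forall t x, ptr_done k t x -> ptr_done (S k) t x.
Proof. intros t [| q]; simpl; auto. apply done_by_mono; lia. Qed.

Lemma tracked_succ k q t : k < n -> invariant k -> tracked k q t -> tracked (S k) q t.
Proof.
  intros Hk (_ & _ & Hprocs) [Hdone | [Hq Hact]].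
  - left; apply done_by_mono with k; auto.
  - assert (HL6 : forall o t0 ts ss rs ps,
              pc k (who k) = L6 o t0 ts ss rs ps -> rs <> NULL).
    { intros * E; destruct (Hprocs (who k)) as [_ Hline]; rewrite E in Hline.
      exact (proj1 Hline). }
    destruct (step_pending q (execution_step Hk) HL6 Hq Hact)
      as [Hpending | (r & Hq' & Hr)].
    + right; exact Hpending.
    + left; exists (S k), r; auto.
Qed.

Lemma ptr_tracked_succ k :
  k < n -> invariant k -> forall t x, ptr_tracked k t x -> ptr_tracked (S k) t x.
Proof. intros Hk Hinv t [| q]; simpl; auto. apply tracked_succ; auto. Qed.

Lemma proc_inv_stepper k : k < n -> invariant k -> proc_inv (S k) (who k).
Proof.
  intros Hk Hinv; pose proof Hinv as (HS & HA & Hprocs).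
  destruct (execution_step Hk) as [Hl _].
  destruct (Hprocs (who k)) as [Hact Hline].
  split.
  - intros t Ht.
    destruct (lstep_active_time_new Hl Ht) as [Ht0 | (o & _ & Hq)].
    + exact (tracked_succ Hk Hinv (Hact t Ht0)).
    + right; auto.
  - eapply lstep_line_inv; [exact Hl | exact (ptr_tracked_succ Hk Hinv) | exact (ptr_done_succ k)
                           | exact HS | exact HA | | | exact Hline].
    + intros q ts rs Hq Hr; exists (S k), rs; auto.
    + intros ts [| q] Htr Hfail; simpl; auto.
      destruct Htr as [Hdone | [Hq _]].
      * apply done_by_mono with k; auto.
      * exfalso; exact (Hfail q eq_refl Hq).
Qed.

Lemma invariant_succ k : k < n -> invariant k -> invariant (S k).
Proof.
  intros Hk Hinv; pose proof Hinv as (HS & HA & Hprocs).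
  destruct (execution_step Hk) as [Hl Hothers].
  split; [| split].
  - unfold S_inv in *.
    destruct (lstep_S Hl)
      as [-> | (o & t & ts & ss & rs & ps & t' & s' & r' & p' & Hx & _ & ->)].
    + destruct (sS (csh (cfg k))) as [[[ts ss] rs] ps].
      split; [apply HS | apply (ptr_tracked_succ Hk Hinv), HS].
    + split; [discriminate |].
      destruct (Hprocs (who k)) as [_ Hline]; rewrite Hx in Hline.
      apply (ptr_tracked_succ Hk Hinv), Hline.
  - unfold A_inv in *.
    destruct (lstep_A Hl) as [-> | (o & t & Ht & ->)].
    + destruct (sA (csh (cfg k))) as [[ta oa] pa]; apply (ptr_tracked_succ Hk Hinv), HA.
    + apply tracked_succ; auto. apply (proj1 (Hprocs (who k))); exact Ht.
  - intros q; destruct (classic (q = who k)) as [-> | Hq].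
    + apply proc_inv_stepper; auto.
    + destruct (Hprocs q) as [Hact Hline]; unfold proc_inv; rewrite (Hothers q Hq).
      split.
      * intros t Ht; apply tracked_succ; auto.
      * exact (line_inv_mono (ptr_tracked_succ Hk Hinv) (ptr_done_succ k) Hline).
Qed.

Lemma invariant_holds k : k <= n -> invariant k.
Proof.
  induction k as [| k IH]; intros Hk.
  - destruct Hexec as [(_ & HA & HS & Hidle) _].
    unfold invariant, S_inv, A_inv, proc_inv; rewrite HA, HS.
    split; [split; [discriminate | exact I] | split; [exact I |]].
    intros q; rewrite Hidle; split; [discriminate | exact I].
  - apply invariant_succ, IH; lia.
Qed.

Lemma S_unchanged_or_done T d ts ss rs ps :
  T + d <= n -> sS (csh (cfg T)) = (ts, ss, rs, ps) ->
  sS (csh (cfg (T + d))) = (ts, ss, rs, ps) \/ ptr_done (T + d) ts ps.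
Proof.
  intros Hd HT; induction d as [| d IH].
  - left; rewrite Nat.add_0_r; exact HT.
  - rewrite Nat.add_succ_r.
    destruct IH as [Hsame | Hdone]; [lia | | right; apply ptr_done_succ, Hdone].
    assert (Hk : T + d < n) by lia.
    destruct (lstep_S (proj1 (execution_step Hk)))
      as [E | (o & t & ts' & ss' & rs' & ps' & t' & s' & r' & p' & Hx & Hold & _)].
    + left; rewrite E; exact Hsame.
    + right; rewrite Hsame in Hold; injection Hold as <- <- <- <-.
      destruct (invariant_holds (Nat.lt_le_incl _ _ Hk)) as (_ & _ & Hprocs).
      destruct (Hprocs (who (T + d))) as [_ Hline]; rewrite Hx in Hline.
      apply ptr_done_succ, (proj1 Hline).
Qed.

Lemma C_mono a b : a <= b -> b <= n -> sC (csh (cfg a)) <= sC (csh (cfg b)).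
Proof.
  intros Hab Hb; induction Hab as [| b Hab IH]; [lia |].
  destruct (execution_step (k := b) ltac:(lia)) as [Hl _].
  pose proof (lstep_C_le Hl); specialize (IH ltac:(lia)); lia.
Qed.

(* Between its invocations at steps [i] and [i'], process [p] runs line 2 at the
   step [j] that defines [t], and that F&I makes every later value of [C] exceed [t]. *)
Lemma invocation_time_lt i i' p t t' :
  i < i' -> who i' = p -> pc i' p = Idle _ _ _ _ ->
  t_of n cfg who (Inv i p) t -> t_of n cfg who (Inv i' p) t' -> t < t'.
Proof.
  intros Hii' Hwho Hidle (j & Hij & Hj & Hwhoj & (o & HL2) & <- & Hquiet)
    (j' & Hij' & Hj' & _ & _ & <- & _).
  assert (Hji' : j < i').
  { destruct (Nat.lt_total j i') as [| [-> | Hlt]]; auto.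
    - congruence.
    - exfalso; exact (Hquiet i' Hii' Hlt Hwho). }
  destruct (execution_step Hj) as [Hl _]; rewrite Hwhoj, HL2 in Hl.
  pose proof (lstep_L2_C Hl); pose proof (@C_mono (S j) j' ltac:(lia) ltac:(lia)); lia.
Qed.

Lemma operation_eq_of_time_ptr {o o' t} :
  is_operation n cfg who o -> is_operation n cfg who o' ->
  t_of n cfg who o t -> t_of n cfg who o' t -> h_of o = h_of o' -> o = o'.
Proof.
  destruct o as [| i p], o' as [| i' p']; simpl; try discriminate; auto.
  intros (_ & Hwho & Hidle) (_ & Hwho' & Hidle') Ht Ht' Hp; injection Hp as <-.
  destruct (Nat.lt_total i i') as [Hlt | [-> | Hlt]]; auto.
  - pose proof (invocation_time_lt Hlt Hwho' Hidle' Ht Ht'); lia.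
  - pose proof (invocation_time_lt Hlt Hwho Hidle Ht' Ht); lia.
Qed.

End Execution.

Theorem mainTheorem7 (OP RES Q Proc : Type) (delta : Q -> OP -> Q -> RES -> Prop)
    (s0 : Q) (n : nat) (cfg : nat -> Config OP RES Q Proc) (who : nat -> Proc) :
  execution delta s0 n cfg who ->
  forall (o o' : operation Proc) (T T' : nat),
    is_operation n cfg who o -> is_operation n cfg who o' ->
    T < T' -> T' <= n ->
    stored_at n cfg who o T -> stored_at n cfg who o' T' ->
    o <> o' ->
    done_at n cfg who o T'.
Proof.
  intros Hexec o o' T T' Ho Ho' HTT' HT' (t & s & r & Ht & HS) (t' & s' & r' & Ht' & HS')
    Hne.
  destruct o as [| i p].
  - exists 0, 0, (RBot _); simpl in *; repeat split; auto; [lia | discriminate].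
  - replace T' with (T + (T' - T)) in * by lia.
    destruct (S_unchanged_or_done Hexec T (T' - T) HT' HS)
      as [Hsame | (T0 & r0 & HT0 & Hh & Hr0)].
    + exfalso; apply Hne.
      rewrite HS' in Hsame; injection Hsame as -> _ _ Hh.
      exact (operation_eq_of_time_ptr Hexec Ho Ho' Ht Ht' (eq_sym Hh)).
    + exists T0, t, r0; auto.
Qed.
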